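(* Let $G$ be a connected chordal graph, $X\subseteq V(G)$ a clique, and $C_1,\dots,C_r$ some connected components of $G\setminus X$. Then for every $j\in[r]$, the evaporation time of $C_j$ in $G$ with exception set $X$ equals the evaporation time of $C_j$ in $G[X\cup C_1\cup\cdots\cup C_r]$ with exception set $X$.
   Context: A vertex is simplicial if its neighborhood is a clique. For a chordal graph $G$ and a clique $X\subseteq V(G)$ (possibly empty), the evaporation sequence of $G$ with exception set $X$ is defined recursively: if $X=V(G)$ it is the empty sequence; otherwise let $L_1$ be the set of simplicial vertices of $G$ that are not in $X$ (this set is always nonempty), and the evaporation sequence is $L_1$ followed by the evaporation sequence of $G-L_1$ with exception set $X$. If the evaporation sequence is $L_1,\dots,L_t$ and $S\subseteq V(G)\setminus X$ is nonempty, the evaporation time of $S$ in $G$ (with exception set $X$) is the largest $i$ with $L_i\cap S\neq\emptyset$. $G[S]$ is the induced subgraph on $S$. *)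

(* A simple graph is a symmetric irreflexive relation e on a
   finType T; its vertex set is the whole of T.  Induced subgraphs G[W] are
   represented by vertex subsets W : {set T}. *)
From mathcomp Require Import all_boot.
Set Implicit Arguments. Unset Strict Implicit. Unset Printing Implicit Defensive.

Section Graphs.
Variables (T : finType) (e : rel T).

Definition simple_graph : Prop := symmetric e /\ irreflexive e.

Definition connected_graph : Prop := forall x y : T, connect e x y.

Definition induced_rel (W : {set T}) : rel T :=
  [rel x y | [&& x \in W, y \in W & e x y]].

Definition connected_in (W : {set T}) : Prop :=
  forall x y, x \in W -> y \in W -> connect (induced_rel W) x y.

Definition clique (X : {set T}) : Prop :=
  forall x y, x \in X -> y \in X -> x != y -> e x y.

(* chordal: every cycle of length >= 4 (distinct vertices p_0 ... p_{k-1},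
   consecutive ones adjacent, p_{k-1} adjacent to p_0) has a chord, i.e. an
   edge between two non-consecutive vertices of the cycle *)
Definition chordal : Prop :=
  forall (p : seq T) (x0 : T), uniq p -> 4 <= size p -> cycle e p ->
    exists i j, [/\ i < j, j < size p, j != i.+1,
                  ~~ ((i == 0) && (j == (size p).-1)) &
                  e (nth x0 p i) (nth x0 p j)].

Definition component_of_minus (X C : {set T}) : Prop :=
  [/\ C != set0, C \subset ~: X, connected_in C &
      forall x y, x \in C -> y \in ~: X -> y \notin C -> ~~ e x y].

Definition simplicial_in (W : {set T}) (v : T) : bool :=
  [forall x, forall y,
     ((x \in W) && (y \in W) && e v x && e v y && (x != y)) ==> e x y].

Definition layer (X W : {set T}) : {set T} :=
  [set v in W :\: X | simplicial_in W v].

(* evaporation sequence of G[W] with exception set X, computed with fuel n: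
   empty if the vertex set equals X (W \subset X, given X \subset W),
   otherwise L_1 followed by the sequence of G[W] - L_1 *)
Fixpoint evap_aux (X : {set T}) (n : nat) (W : {set T}) : seq {set T} :=
  match n with
  | 0 => [::]
  | n'.+1 => if W \subset X then [::]
             else layer X W :: evap_aux X n' (W :\: layer X W)
  end.

(* fuel #|T| + 1 suffices: for chordal graphs every layer is nonempty *)
Definition evap_seq (W X : {set T}) : seq {set T} := evap_aux X #|T|.+1 W.

(* evaporation time of S: largest i (1-indexed) with L_i meeting S *)
Definition evap_time (W X S : {set T}) : nat :=
  let s := evap_seq W X in
  \max_(i < size s | S :&: nth set0 s i != set0) i.+1.

End Graphs.

From mathcomp Require Import all_boot.
Set Implicit Arguments. Unset Strict Implicit. Unset Printing Implicit Defensive.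

(* Call W0 "closed outside X" when every vertex of W0 \ X has
   all its neighbours in W0.  For such W0, simpliciality of a vertex
   v \in W0 \ X only looks at neighbours of v, which all lie in W0; hence
   the first layer of G[W :&: W0] is the first layer of G[W] cut down to W0.
   Iterating, the i-th layer of the evaporation sequence of G[W :&: W0] is
   the i-th layer of that of G[W] intersected with W0, so any S \subset W0
   meets exactly the same layers in both sequences and has the same
   evaporation time.  The theorem follows because X :|: \bigcup_i C i is
   closed outside X: a component of G \ X has no neighbours outside itself
   and X. *)

Section Restriction.
Variables (T : finType) (e : rel T) (X : {set T}).

Definition closed_outside (W0 : {set T}) : Prop :=
  forall v x, v \in W0 -> v \notin X -> e v x -> x \in W0.

Lemma components_closed_outside (r : nat) (C : 'I_r -> {set T}) :
  (forall i, component_of_minus e X (C i)) ->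
  closed_outside (X :|: \bigcup_(i < r) C i).
Proof.
move=> compC v x; rewrite in_setU => /orP[-> //|/bigcupP[i _ vC]] _ evx.
rewrite in_setU; case: (boolP (x \in X)) => //= xX.
apply/bigcupP; exists i => //; apply: contraT => xNC.
case: (compC i) => _ _ _ /(_ v x vC); rewrite in_setC xX evx.
by move/(_ isT xNC).
Qed.

Lemma size_evap_aux n (W : {set T}) : size (evap_aux e X n W) <= n.
Proof. elim: n W => [|n IH] W //=; case: (W \subset X) => //=; exact: IH. Qed.

(* The evaporation time only depends on the layers with index below
   #|T|.+2, a bound independent of the vertex set W. *)
Lemma evap_time_widen (W S : {set T}) :
  evap_time e W X S =
  \max_(i < #|T|.+2 | S :&: nth set0 (evap_seq e W X) i != set0) i.+1.
Proof.
have size_lt : size (evap_seq e W X) <= #|T|.+2.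
  exact: leq_trans (size_evap_aux _ _) _.
rewrite /evap_time (big_ord_widen_cond _
  (fun i => S :&: nth set0 (evap_seq e W X) i != set0) (fun i => i.+1) size_lt).
apply: eq_bigl => i; case: ltnP => i_lt; first by rewrite andbT.
by rewrite andbF nth_default // setI0 eqxx.
Qed.

Lemma layer_subset0 (W : {set T}) : W \subset X -> layer e X W = set0.
Proof.
move=> sWX; apply/setP => v; rewrite !inE.
by case: (boolP (v \in W)) => [/(subsetP sWX) ->|]; rewrite ?andbF.
Qed.

Lemma evap_aux_subset_nil n (W : {set T}) :
  W \subset X -> evap_aux e X n W = [::].
Proof. by case: n => //= n ->. Qed.

Variable W0 : {set T}.
Hypothesis W0_closed : closed_outside W0.

(* Simpliciality of v \in W0 \ X is unchanged by restricting to W0, since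
   all neighbours of v already lie in W0. *)
Lemma simplicial_in_setI (W : {set T}) v : v \in W0 -> v \notin X ->
  simplicial_in e (W :&: W0) v = simplicial_in e W v.
Proof.
move=> vW0 vNX; apply: eq_forallb => x; apply: eq_forallb => y; rewrite !inE.
case evx: (e v x); case evy: (e v y); rewrite ?andbF ?andbT //.
by rewrite (W0_closed vW0 vNX evx) (W0_closed vW0 vNX evy) !andbT.
Qed.

Lemma layer_setI (W : {set T}) : layer e X (W :&: W0) = layer e X W :&: W0.
Proof.
apply/setP => v; rewrite !inE.
case: (boolP (v \in W0)) => vW0; rewrite ?andbF ?andbT //.
by case: (boolP (v \in X)) => //= vNX; rewrite simplicial_in_setI.
Qed.

Lemma nth_evap_aux_setI n (W : {set T}) i :
  nth set0 (evap_aux e X n (W :&: W0)) i = nth set0 (evap_aux e X n W) i :&: W0.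
Proof.
elim: n W i => [|n IH] W i /=; first by rewrite nth_nil set0I.
have [sWX|_] := boolP (W \subset X).
  by rewrite (subset_trans (subsetIl W W0) sWX) nth_nil set0I.
have shrink : W :&: W0 :\: layer e X (W :&: W0) = (W :\: layer e X W) :&: W0.
  apply/setP => v; rewrite layer_setI !inE.
  by case: (v \in W0); rewrite ?andbF ?andbT.
case: ifP => [sWIX|_]; case: i => [|i] //=.
- by rewrite -layer_setI layer_subset0.
- rewrite -IH -shrink evap_aux_subset_nil ?nth_nil //.
  exact: subset_trans (subsetDl _ _) sWIX.
- by rewrite layer_setI.
- by rewrite -IH shrink.
Qed.

Lemma evap_time_setI (W S : {set T}) : S \subset W0 ->
  evap_time e W X S = evap_time e (W :&: W0) X S.
Proof.
move=> sSW0; rewrite !evap_time_widen; apply: eq_bigl => i.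
by rewrite /evap_seq nth_evap_aux_setI [_ :&: W0]setIC setIA (setIidPl sSW0).
Qed.

End Restriction.

Theorem lemma5p11 (T : finType) (e : rel T) (X : {set T}) (r : nat)
    (C : 'I_r -> {set T}) :
  simple_graph e -> connected_graph e -> chordal e -> clique e X ->
  (forall i, component_of_minus e X (C i)) ->
  forall j : 'I_r,
    evap_time e [set: T] X (C j) =
    evap_time e (X :|: \bigcup_(i < r) C i) X (C j).
Proof.
move=> _ _ _ _ compC j.
have CjW0 : C j \subset X :|: \bigcup_(i < r) C i.
  exact: subset_trans (bigcup_sup j isT) (subsetUr _ _).
rewrite (evap_time_setI (components_closed_outside compC) _ CjW0).
by rewrite setTI.
Qed.
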